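(* Let $v:\mathbb{R}\to(0,\infty)$ be decreasing on $(-\infty,0]$ and increasing on $[0,\infty)$, with $v(0)\ge1$. Then $v$ is admissible if and only if \[\sup_{t\in\mathbb{R}}\frac{v(2t)}{v(t)}<\infty.\]
   Context: A measurable function $v:\mathbb{R}\to(0,\infty)$ is called admissible if $v(s)\ge1$ for all $s\in\mathbb{R}$ and $\sup_{s,t\in\mathbb{R}}\frac{v(s+t)}{v(s)+v(t)}<\infty$. *)

From HB Require Import structures.
From mathcomp Require Import all_boot all_order all_algebra.
From mathcomp Require Import all_classical all_reals all_analysis.
Set Implicit Arguments. Unset Strict Implicit. Unset Printing Implicit Defensive.
Import Order.TTheory GRing.Theory Num.Theory.
Local Open Scope classical_set_scope.
Local Open Scope ring_scope.

(* v is admissible: measurable, v >= 1, and sup_{s,t} v(s+t)/(v s + v t) < oo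
   (the quotient is a positive real, so "sup < oo" = bounded above). *)
Definition admissible (R : realType) (v : R -> R) : Prop :=
  measurable_fun setT v /\
  (forall s : R, 1 <= v s) /\
  (exists C : R, forall s t : R, v (s + t) / (v s + v t) <= C).

From HB Require Import structures.
From mathcomp Require Import all_boot all_order all_algebra.
From mathcomp Require Import all_classical all_reals all_analysis.
From mathcomp Require Import lra measurable_realfun.
Import Order.TTheory GRing.Theory Num.Theory.
Local Open Scope classical_set_scope.
Local Open Scope ring_scope.

(* Taking s = t in the admissibility quotient bounds v(2t)/v(t) by twice its
   supremum.  Conversely, since v is decreasing then increasing, v(s + t) is
   at most max(v(2s), v(2t)): if s <= t, then s + t lies between 2s and 2t,
   on the side of 0 where v is monotone towards the relevant endpoint.  A
   doubling bound C then gives v(s + t) <= C max(v s, v t) <= C (v s + v t).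
   Measurability holds because v is the maximum of a nondecreasing and a
   nonincreasing function. *)

Section DoublingBound.
Context {R : realType} {v : R -> R}.
Hypothesis vpos : forall t : R, 0 < v t.

Lemma doubling_of_sum_quotient_bound (C : R) :
  (forall s t : R, v (s + t) / (v s + v t) <= C) ->
  forall t : R, v (2 * t) / v t <= 2 * C.
Proof.
move=> HC t; have vt := vpos t.
have := HC t t; rewrite !ler_pdivrMr ?addr_gt0 //.
by rewrite -mulrA !mulr_natl !mulr2n mulrDr.
Qed.

Section Unimodal.
Hypothesis vdec : forall s t : R, s <= t -> t <= 0 -> v t <= v s.
Hypothesis vinc : forall s t : R, 0 <= s -> s <= t -> v s <= v t.

Lemma unimodal_min_at0 (s : R) : v 0 <= v s.
Proof.
case: (leP 0 s) => [s_ge0|s_lt0]; first exact: vinc.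
by apply: vdec => //; exact: ltW.
Qed.

Lemma measurable_unimodal : measurable_fun setT v.
Proof.
have -> : v = (fun x => v (Num.max x 0)) \max (fun x => v (Num.min x 0)).
  apply: funext => x /=.
  by case: (leP 0 x) => hx; [rewrite (max_l (unimodal_min_at0 x))
                            | rewrite (max_r (unimodal_min_at0 x))].
apply: measurable_maxr.
  apply: nondecreasing_measurable => // x y xy /=.
  apply: vinc; first by rewrite le_max lexx orbT.
  by rewrite ge_max !le_max xy lexx orbT.
apply: nonincreasing_measurable => // x y xy /=.
apply: vdec; last by rewrite ge_min lexx orbT.
by rewrite le_min !ge_min xy lexx orbT.
Qed.

Lemma unimodal_le_max_double (s t : R) :
  v (s + t) <= Num.max (v (2 * s)) (v (2 * t)).
Proof.
wlog st : s t / s <= t.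
  move=> wlog_st; case: (leP s t) => [|/ltW ts]; first exact: wlog_st.
  by rewrite addrC maxC; exact: wlog_st.
rewrite le_max; case: (leP 0 (s + t)) => [st_ge0|st_lt0].
  by apply/orP; right; apply: vinc => //; lra.
by apply/orP; left; apply: vdec; lra.
Qed.

Lemma sum_quotient_bound_of_doubling (C : R) :
  (forall t : R, v (2 * t) / v t <= C) ->
  forall s t : R, v (s + t) / (v s + v t) <= C.
Proof.
move=> HC s t; have vs := vpos s; have vt := vpos t.
have dbl x : v (2 * x) <= C * v x by rewrite -ler_pdivrMr // mulrC.
have C_ge0 : 0 <= C.
  by apply: le_trans (HC 0); rewrite mulr0 divr_ge0 // ltW.
rewrite ler_pdivrMr ?addr_gt0 //; apply: le_trans (unimodal_le_max_double s t) _.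
rewrite ge_max mulrDr; apply/andP; split.
  by apply: le_trans (dbl s) _; rewrite lerDl mulr_ge0 // ltW.
by apply: le_trans (dbl t) _; rewrite lerDr mulr_ge0 // ltW.
Qed.

End Unimodal.
End DoublingBound.

Theorem lemma2p2 (R : realType) (v : R -> R)
  (vpos : forall t : R, 0 < v t)
  (vdec : forall s t : R, s <= t -> t <= 0 -> v t <= v s)
  (vinc : forall s t : R, 0 <= s -> s <= t -> v s <= v t)
  (v0 : 1 <= v 0) :
  admissible v <-> (exists C : R, forall t : R, v (2 * t) / v t <= C).
Proof.
split.
  case=> _ [_ [C HC]]; exists (2 * C).
  exact: doubling_of_sum_quotient_bound vpos C HC.
case=> C HC; split; first exact: measurable_unimodal vdec vinc.
split; first by move=> s; apply: le_trans v0 (unimodal_min_at0 vdec vinc s).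
by exists C; exact: sum_quotient_bound_of_doubling vpos vdec vinc C HC.
Qed.
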